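(* Let $k\ge3$. Define the planar $2k$-terminal network $(G,c)$: non-terminal vertices $u_{i,j}$ for $1\le i,j\le k$ ($i$ the column, $j$ the row); terminals $v_1,\dots,v_k,h_1,\dots,h_k$, with $v_j$ adjacent only to $u_{1,j}$ and $h_i$ adjacent only to $u_{i,1}$; grid edges $u_{i,j}u_{i+1,j}$ ($1\le i\le k-1$, $1\le j\le k$) and $u_{i,j}u_{i,j+1}$ ($1\le i\le k$, $1\le j\le k-1$). Costs: every terminal edge costs $k^4$; each edge $u_{i,k}u_{i+1,k}$ and each edge $u_{k,j}u_{k,j+1}$ costs $k^4$; each edge $u_{i,j}u_{i+1,j}$ with $i,j\le k-1$ costs $1$; each edge $u_{i,j}u_{i,j+1}$ with $i,j\le k-1$ costs $1-\varepsilon_{i,j}$ where $\varepsilon_{i,j}=j/k^4$. For $1\le i,j\le k-1$ let $S_{i,j}=\{h_1,\dots,h_i,v_1,\dots,v_j\}$. Then for all $1\le i,j\le k-1$, the cut $(W,V(G)\setminus W)$ with $W=S_{i,j}\cup\{u_{\alpha,\beta}:1\le\alpha\le i,\,1\le\beta\le j\}$ is the unique minimum-cost $S_{i,j}$-separating cut of $(G,c)$, and its cost is $i+j-\sum_{\alpha=1}^{i}\varepsilon_{\alpha,j}$.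
   Context: The terminal set is $Q=\{v_1,\dots,v_k,h_1,\dots,h_k\}$. A cut $(W,V(G)\setminus W)$ is $S$-separating if $W\cap Q\in\{S,Q\setminus S\}$; its cost is the total cost of edges with exactly one endpoint in $W$. Unique means every other $S_{i,j}$-separating cut has strictly larger cost. *)

From HB Require Import structures.
From mathcomp Require Import all_boot all_order all_algebra.
Set Implicit Arguments. Unset Strict Implicit. Unset Printing Implicit Defensive.
Import Order.TTheory GRing.Theory Num.Theory.
Local Open Scope ring_scope.

(* Vertices of the 2k-terminal grid network, 0-based indices:
   inl (a, b)   = u_{a+1, b+1}   (a = column, b = row)
   inr (inl b)  = v_{b+1}
   inr (inr a)  = h_{a+1}                                           *)
Definition vertex (k : nat) : finType := (('I_k * 'I_k) + ('I_k + 'I_k))%type.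

Definition uv (k : nat) (a b : 'I_k) : vertex k := inl (a, b).
Definition vt (k : nat) (b : 'I_k) : vertex k := inr (inl b).
Definition ht (k : nat) (a : 'I_k) : vertex k := inr (inr a).

Definition K4 (k : nat) : rat := (k ^ 4)%:R.

Definition eps (k : nat) (j : nat) : rat := j%:R / K4 k.

(* Oriented edge cost: nonzero only for the unique chosen orientation of an
   edge of G; 0 for non-adjacent pairs. *)
Definition cedge (k : nat) (x y : vertex k) : rat :=
  match x, y with
  | inr (inl j), inl (a, b) =>
      if ((a : nat) == 0%N) && (b == j) then K4 k else 0
  | inr (inr i), inl (a, b) =>
      if ((b : nat) == 0%N) && (a == i) then K4 k else 0
  | inl (a, b), inl (a', b') =>
      if ((b' : nat) == b) && ((a' : nat) == a.+1) then
        (if (b : nat) == k.-1 then K4 k else 1)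
      else if ((a' : nat) == a) && ((b' : nat) == b.+1) then
        (if (a : nat) == k.-1 then K4 k else 1 - eps k b.+1)
      else 0
  | _, _ => 0
  end.

Definition cost (k : nat) (x y : vertex k) : rat := cedge x y + cedge y x.

Definition cut_cost (k : nat) (W : {set vertex k}) : rat :=
  \sum_(x in W) \sum_(y in ~: W) cost x y.

Definition is_terminal (k : nat) (x : vertex k) : bool :=
  if x is inr _ then true else false.
Definition terminals (k : nat) : {set vertex k} := [set x | is_terminal x].

Definition separating (k : nat) (S W : {set vertex k}) : bool :=
  (W :&: terminals k == S) || (W :&: terminals k == terminals k :\: S).

Definition Sij (k i j : nat) : {set vertex k} :=
  [set x : vertex k | match x with
           | inr (inr a) => (a < i)%N
           | inr (inl b) => (b < j)%N
           | inl _ => false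
           end].

Definition Wij (k i j : nat) : {set vertex k} :=
  Sij k i j :|: [set x : vertex k | match x with
                         | inl (a, b) => (a < i)%N && (b < j)%N
                         | inr _ => false
                         end].

From HB Require Import structures.
From mathcomp Require Import all_boot all_order all_algebra zify lra.
Import Order.TTheory GRing.Theory Num.Theory.
Set Implicit Arguments. Unset Strict Implicit. Unset Printing Implicit Defensive.
Local Open Scope ring_scope.

(* Write k = n.+1 and index grid vertices u_{a,b} by 0 <= a, b <= n.  The
   cost of any cut W splits into four nonnegative parts: the links from the
   terminals v_b, the links from the terminals h_a, the horizontal edges of
   each row and the vertical edges of each column (cut_cost_decomp).  For
   W_{i,j} the links are uncut, each of the first j rows is cut once and each
   of the first i columns is cut once at height j, which gives the cost
   j + i (1 - eps_j).

   For a competitor W whose terminals agree with S_{i,j} and whose cost is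
   below k^4, no edge of cost k^4 is cut; this pins down W on the first row
   and column and forces the last row and column outside W.  Hence each of
   the first j rows is cut at least once and each of the first i columns is
   cut at least once.  If some u_{a,j} with a < i lies in W, row j is cut
   twice and the cost exceeds that of W_{i,j} by almost 2.  Otherwise every
   one of the first i columns is cut below height j, at cost >= 1 - eps_j,
   and a vertex where W differs from W_{i,j} makes one column strictly more
   expensive.  The complementary separating case follows from the symmetry
   cut_cost (~: W) = cut_cost W. *)

Lemma sum_if_eq n (c : rat) m :
  \sum_(i < n.+1) (if (i : nat) == m then c else 0) = if (m <= n)%N then c else 0.
Proof.
case: leqP => hm.
  rewrite (bigD1 (inord m)) //= inordK // eqxx big1 ?addr0 // => i hi.
  rewrite ifN //; apply: contra hi => /eqP him; apply/eqP; apply: val_inj.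
  by rewrite /= him inordK.
rewrite big1 // => i _; case: eqP => // him.
by move: (ltn_ord i); rewrite him ltnS leqNgt hm.
Qed.

Lemma sum_if_lt (c : rat) j k :
  \sum_(b < k) (if (b < j)%N then c else 0) = c *+ minn j k.
Proof.
elim: k => [|k IH]; first by rewrite big_ord0 minn0.
rewrite big_ord_recr /= IH.
case: (leqP j k) => h; first by rewrite addr0 (minn_idPl (leqW h)).
by rewrite (minn_idPr h) mulrS addrC.
Qed.

Lemma ler_sum_term n (F : nat -> rat) m : (forall x, 0 <= F x) -> (m <= n)%N ->
  F m <= \sum_(x < n.+1) F x.
Proof.
move=> F_ge0 hm; rewrite (bigD1 (inord m)) //= inordK // lerDl.
by apply: sumr_ge0 => x _.
Qed.

Lemma ler_sum_term2 n (F : nat -> rat) m1 m2 : (forall x, 0 <= F x) ->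
  m1 != m2 -> (m1 <= n)%N -> (m2 <= n)%N -> F m1 + F m2 <= \sum_(x < n.+1) F x.
Proof.
move=> F_ge0 hne h1 h2.
rewrite (bigD1 (inord m1)) //= inordK // lerD2l.
rewrite (bigD1 (inord m2)) /=; last first.
  by apply: contra hne => /eqP/(congr1 val); rewrite /= !inordK // => ->.
by rewrite inordK // lerDl; apply: sumr_ge0 => x _.
Qed.

Lemma ler_sum_upto n (F G : nat -> rat) : (forall x, (x <= n)%N -> G x <= F x) ->
  \sum_(x < n.+1) G x <= \sum_(x < n.+1) F x.
Proof. by move=> h; apply: ler_sum => x _; apply: h; rewrite -ltnS. Qed.

Lemma ltr_sum_upto n (F G : nat -> rat) m : (forall x, (x <= n)%N -> G x <= F x) ->
  G m < F m -> (m <= n)%N -> \sum_(x < n.+1) G x < \sum_(x < n.+1) F x.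
Proof.
move=> hle hlt hm.
rewrite (bigD1 (inord m)) //= [X in _ < X](bigD1 (inord m)) //= inordK //.
by apply: ltr_leD => //; apply: ler_sum => x _; apply: hle; rewrite -ltnS.
Qed.

Lemma bool_switch (f : nat -> bool) c d : (c <= d)%N -> f c != f d ->
  exists b, [/\ (c <= b)%N, (b < d)%N & f b != f b.+1].
Proof.
elim: d => [|d IH] hcd hf.
  by move: hcd; rewrite leqn0 => /eqP hc; rewrite hc eqxx in hf.
case: (eqVneq c d.+1) => [hc|hc]; first by rewrite hc eqxx in hf.
have hcd' : (c <= d)%N by lia.
case: (eqVneq (f c) (f d)) => hfd; first by exists d; split => //; rewrite -hfd.
by have [b [h1 h2 h3]] := IH hcd' hfd; exists b; split => //; lia.
Qed.

Definition cross (p q : bool) : rat := (p != q)%:R.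

Lemma cross_ge0 p q : 0 <= cross p q.
Proof. by rewrite /cross ler0n. Qed.

Lemma cut_costE k (W : {set vertex k}) :
  cut_cost W = \sum_x \sum_y cedge x y * cross (x \in W) (y \in W).
Proof.
rewrite /cut_cost [RHS](bigID (fun x => x \in W)) /=.
have in_side x : x \in W -> \sum_y cedge x y * cross (x \in W) (y \in W)
     = \sum_(y in ~: W) cedge x y.
  move=> xW; rewrite [RHS]big_mkcond /=; apply: eq_bigr => y _.
  by rewrite xW inE /cross; case: (y \in W); rewrite ?mulr0 ?mulr1.
have out_side x : x \notin W -> \sum_y cedge x y * cross (x \in W) (y \in W)
     = \sum_(y in W) cedge x y.
  move=> xW; rewrite [RHS]big_mkcond /=; apply: eq_bigr => y _.
  by rewrite (negbTE xW) /cross; case: (y \in W); rewrite ?mulr0 ?mulr1.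
rewrite (eq_bigr _ in_side) (eq_bigr _ out_side) /cost.
under eq_bigr do rewrite big_split /=.
rewrite big_split /=; congr (_ + _).
by rewrite exchange_big /=; apply: eq_bigl => x; rewrite inE.
Qed.

Lemma cut_costC k (W : {set vertex k}) : cut_cost (~: W) = cut_cost W.
Proof.
rewrite !cut_costE; apply: eq_bigr => x _; apply: eq_bigr => y _.
by rewrite !inE /cross; case: (x \in W); case: (y \in W).
Qed.

Definition inside n (W : {set vertex n.+1}) (a b : nat) : bool :=
  uv (inord a) (inord b) \in W.

Lemma insideE n (W : {set vertex n.+1}) (a b : 'I_n.+1) :
  inside W a b = (inl (a, b) \in W).
Proof. by rewrite /inside !inord_val. Qed.

(* Costs of the horizontal edge u_{a,b} u_{a+1,b} and of the vertical edge
   u_{a,b} u_{a,b+1}, read off from cedge. *)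
Definition hcost n (b : nat) : rat := if b == n then K4 n.+1 else 1.
Definition vcost n (a b : nat) : rat :=
  if a == n then K4 n.+1 else 1 - eps n.+1 b.+1.

Definition hcut n (W : {set vertex n.+1}) (a b : nat) : rat :=
  if (a < n)%N then hcost n b * cross (inside W a b) (inside W a.+1 b) else 0.
Definition vcut n (W : {set vertex n.+1}) (a b : nat) : rat :=
  if (b < n)%N then vcost n a b * cross (inside W a b) (inside W a b.+1) else 0.

Definition row_cost n (W : {set vertex n.+1}) (b : nat) : rat :=
  \sum_(a < n.+1) hcut W a b.
Definition col_cost n (W : {set vertex n.+1}) (a : nat) : rat :=
  \sum_(b < n.+1) vcut W a b.
Definition rows_cost n (W : {set vertex n.+1}) : rat := \sum_(b < n.+1) row_cost W b.
Definition cols_cost n (W : {set vertex n.+1}) : rat := \sum_(a < n.+1) col_cost W a.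

Definition vlinks_cost n (W : {set vertex n.+1}) : rat :=
  \sum_(b < n.+1) K4 n.+1 * cross (vt b \in W) (inside W 0 b).
Definition hlinks_cost n (W : {set vertex n.+1}) : rat :=
  \sum_(a < n.+1) K4 n.+1 * cross (ht a \in W) (inside W a 0).

Lemma sum_grid n (F : 'I_n.+1 * 'I_n.+1 -> rat) :
  \sum_p F p = \sum_(a < n.+1) \sum_(b < n.+1) F (a, b).
Proof. by rewrite pair_bigA; apply: eq_bigr => -[a b]. Qed.

(* The edges leaving a grid vertex are its right and upper neighbours. *)
Lemma grid_vertex_cost n (W : {set vertex n.+1}) (a b : 'I_n.+1) :
  \sum_(p : 'I_n.+1 * 'I_n.+1) cedge (inl (a, b)) (inl p) *
     cross (inl (a, b) \in W) (inl p \in W) = hcut W a b + vcut W a b.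
Proof.
transitivity (\sum_(a' < n.+1) ((if (a' : nat) == a.+1 then
     \sum_(b' < n.+1) (if (b' : nat) == b then
        hcost n b * cross (inside W a b) (inside W a.+1 b) else 0) else 0)
   + (if (a' : nat) == a then
     \sum_(b' < n.+1) (if (b' : nat) == b.+1 then
        vcost n a b * cross (inside W a b) (inside W a b.+1) else 0) else 0))).
  rewrite sum_grid; apply: eq_bigr => a' _.
  case: (eqVneq (a' : nat) a.+1) => h1.
    have h2 : (a' : nat) != a by rewrite h1 (gtn_eqF (ltnSn _)).
    rewrite (negbTE h2) addr0; apply: eq_bigr => b' _.
    rewrite /= h1 eqxx andbT.
    case: eqP => hb /=; last by rewrite -h1 (negbTE h2) /= mul0r.
    have -> : a' = inord a.+1 by apply: val_inj; rewrite /= h1 inordK // -h1.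
    have -> : b' = b by apply: val_inj.
    by rewrite /hcost /cross /inside !inord_val.
  rewrite add0r /=.
  case: (eqVneq (a' : nat) a) => h2; last first.
    by apply: big1 => b' _; rewrite (negbTE h1) andbF mul0r.
  have -> : a' = a by apply: val_inj.
  apply: eq_bigr => b' _; rewrite (ltn_eqF (ltnSn a)) andbF /=.
  case: eqP => hb; last by rewrite mul0r.
  have -> : b' = inord b.+1 by apply: val_inj; rewrite /= hb inordK // -hb.
  by rewrite /vcost /cross /inside !inord_val.
by rewrite big_split /= !sum_if_eq !leq_ord.
Qed.

Lemma vt_vertex_cost n (W : {set vertex n.+1}) (b : 'I_n.+1) :
  \sum_(p : 'I_n.+1 * 'I_n.+1) cedge (vt b) (inl p) * cross (vt b \in W) (inl p \in W)
  = K4 n.+1 * cross (vt b \in W) (inside W 0 b).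
Proof.
transitivity (\sum_(a' < n.+1) (if (a' : nat) == 0%N then
   \sum_(b' < n.+1) (if (b' : nat) == b then
      K4 n.+1 * cross (vt b \in W) (inside W 0 b) else 0) else 0));
  last by rewrite !sum_if_eq !leq_ord.
rewrite sum_grid /=; apply: eq_bigr => a' _.
case: eqP => ha /=; last by apply: big1 => b' _; rewrite mul0r.
apply: eq_bigr => b' _.
case: (eqVneq b' b) => [->|hb]; last by rewrite mul0r ifN // (inj_eq val_inj).
have -> : a' = inord 0 by apply: val_inj; rewrite /= ha inordK.
by rewrite eqxx /inside inord_val.
Qed.

Lemma ht_vertex_cost n (W : {set vertex n.+1}) (a : 'I_n.+1) :
  \sum_(p : 'I_n.+1 * 'I_n.+1) cedge (ht a) (inl p) * cross (ht a \in W) (inl p \in W)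
  = K4 n.+1 * cross (ht a \in W) (inside W a 0).
Proof.
transitivity (\sum_(a' < n.+1) (if (a' : nat) == a then
   \sum_(b' < n.+1) (if (b' : nat) == 0%N then
      K4 n.+1 * cross (ht a \in W) (inside W a 0) else 0) else 0));
  last by rewrite !sum_if_eq !leq_ord.
rewrite sum_grid /=; apply: eq_bigr => a' _.
case: (eqVneq a' a) => [->|ha]; last first.
  by rewrite ifN ?(inj_eq val_inj) //; apply: big1 => b' _; rewrite andbF mul0r.
rewrite eqxx; apply: eq_bigr => b' _.
rewrite andbT; case: eqP => hb /=; last by rewrite mul0r.
have -> : b' = inord 0 by apply: val_inj; rewrite /= hb inordK.
by rewrite /inside inord_val.
Qed.

Lemma cut_cost_decomp n (W : {set vertex n.+1}) :
  cut_cost W = vlinks_cost W + hlinks_cost W + rows_cost W + cols_cost W.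
Proof.
rewrite cut_costE big_sumType.
have -> : \sum_(p : 'I_n.+1 * 'I_n.+1)
    \sum_y cedge (inl p) y * cross (inl p \in W) (y \in W) = rows_cost W + cols_cost W.
  transitivity (\sum_(a < n.+1) \sum_(b < n.+1) (hcut W a b + vcut W a b)).
    rewrite sum_grid; apply: eq_bigr => a _; apply: eq_bigr => b _.
    by rewrite big_sumType /= grid_vertex_cost big1 ?addr0 // => s _; rewrite mul0r.
  under eq_bigr do rewrite big_split /=.
  by rewrite big_split /= exchange_big.
rewrite big_sumType.
have -> : \sum_(b < n.+1) \sum_y cedge (vt b) y * cross (vt b \in W) (y \in W)
    = vlinks_cost W.
  apply: eq_bigr => b _; rewrite big_sumType vt_vertex_cost.
  by rewrite big1 /= ?addr0 // => -[] s _; rewrite mul0r.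
have -> : \sum_(a < n.+1) \sum_y cedge (ht a) y * cross (ht a \in W) (y \in W)
    = hlinks_cost W.
  apply: eq_bigr => a _; rewrite big_sumType ht_vertex_cost.
  by rewrite big1 /= ?addr0 // => -[] s _; rewrite mul0r.
by rewrite /= addrC addrA.
Qed.

Lemma K4_gt0 k : (0 < k)%N -> 0 < K4 k.
Proof. by move=> hk; rewrite /K4 ltr0n expn_gt0 hk. Qed.

Lemma K4_ge1 n : 1 <= K4 n.+1.
Proof. by rewrite /K4 ler1n expn_gt0. Qed.

(* i + j < k^4 for i, j < k: a single heavy edge outweighs the light ones. *)
Lemma K4_big n i j : (i <= n)%N -> (j <= n)%N -> i%:R + j%:R < K4 n.+1.
Proof. by move=> hi hj; rewrite -natrD /K4 ltr_nat !expnS expn0; nia. Qed.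

Lemma eps_ge0 k m : (0 < k)%N -> 0 <= eps k m.
Proof. by move=> hk; rewrite /eps divr_ge0 // ?ler0n // ltW // K4_gt0. Qed.

Lemma eps_le k m1 m2 : (0 < k)%N -> (m1 <= m2)%N -> eps k m1 <= eps k m2.
Proof. by move=> hk hm; rewrite /eps ler_pM2r ?invr_gt0 ?K4_gt0 // ler_nat. Qed.

Lemma eps_lt k m1 m2 : (0 < k)%N -> (m1 < m2)%N -> eps k m1 < eps k m2.
Proof. by move=> hk hm; rewrite /eps ltr_pM2r ?invr_gt0 ?K4_gt0 // ltr_nat. Qed.

Lemma small_eps n i m : (i <= n)%N -> (m <= n)%N -> i%:R * eps n.+1 m < 1.
Proof.
move=> hi hm; rewrite /eps mulrA -natrM ltr_pdivrMr ?K4_gt0 // mul1r /K4 ltr_nat.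
have h : (i * m <= n * n)%N by apply: leq_mul.
by apply: (leq_ltn_trans h); rewrite !expnS expn0; nia.
Qed.

Lemma eps_lt1 n : eps n.+1 n < 1.
Proof. by rewrite /eps ltr_pdivrMr ?K4_gt0 // mul1r /K4 ltr_nat !expnS expn0; nia. Qed.

Lemma hcost_ge1 n b : 1 <= hcost n b.
Proof. by rewrite /hcost; case: ifP => _ //; apply: K4_ge1. Qed.

Lemma vcost_ge n a b : (b < n)%N -> 1 - eps n.+1 n <= vcost n a b.
Proof.
move=> hb; rewrite /vcost; case: ifP => _; last first.
  by rewrite lerD2l lerN2; apply: eps_le.
by have := K4_ge1 n; have := @eps_ge0 n.+1 n isT; lra.
Qed.

Lemma vcost_inner n a b : a != n -> vcost n a b = 1 - eps n.+1 b.+1.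
Proof. by move=> h; rewrite /vcost (negbTE h). Qed.

Lemma hcut_ge0 n (W : {set vertex n.+1}) a b : 0 <= hcut W a b.
Proof.
rewrite /hcut; case: ifP => // _; apply: mulr_ge0 (cross_ge0 _ _).
exact: le_trans ler01 (hcost_ge1 n b).
Qed.

Lemma vcut_ge0 n (W : {set vertex n.+1}) a b : 0 <= vcut W a b.
Proof.
rewrite /vcut; case: ifP => // hb; apply: mulr_ge0 (cross_ge0 _ _).
by have := vcost_ge a hb; have := eps_lt1 n; lra.
Qed.

Lemma row_cost_ge0 n (W : {set vertex n.+1}) b : 0 <= row_cost W b.
Proof. by apply: sumr_ge0 => a _; apply: hcut_ge0. Qed.

Lemma col_cost_ge0 n (W : {set vertex n.+1}) a : 0 <= col_cost W a.
Proof. by apply: sumr_ge0 => b _; apply: vcut_ge0. Qed.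

Lemma cut_cost_parts n (W : {set vertex n.+1}) :
  [/\ vlinks_cost W <= cut_cost W, hlinks_cost W <= cut_cost W
    & rows_cost W + cols_cost W <= cut_cost W].
Proof.
have link_ge0 p q : 0 <= K4 n.+1 * cross p q.
  exact: mulr_ge0 (ltW (K4_gt0 _)) (cross_ge0 _ _).
have v0 : 0 <= vlinks_cost W by apply: sumr_ge0 => b _.
have h0 : 0 <= hlinks_cost W by apply: sumr_ge0 => a _.
have r0 : 0 <= rows_cost W by apply: sumr_ge0 => b _; apply: row_cost_ge0.
have c0 : 0 <= cols_cost W by apply: sumr_ge0 => a _; apply: col_cost_ge0.
by rewrite cut_cost_decomp; split; lra.
Qed.

(* The corner cut W_{i,j}: links uncut, rows b < j cut once (between columns
   i-1 and i), columns a < i cut once (between rows j-1 and j). *)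
Lemma inside_Wij n i j a b : (a <= n)%N -> (b <= n)%N ->
  inside (Wij n.+1 i j) a b = (a < i)%N && (b < j)%N.
Proof. by move=> ha hb; rewrite /inside /Wij !inE /= !inordK. Qed.

Lemma row_cost_Wij n i j b : (1 <= i)%N -> (i <= n)%N -> (j <= n)%N -> (b <= n)%N ->
  row_cost (Wij n.+1 i j) b = if (b < j)%N then 1 else 0.
Proof.
move=> hi1 hin hjn hb.
transitivity (\sum_(a < n.+1) (if (a : nat) == i.-1 then
   (if (b < j)%N then 1 else 0) else 0 : rat)); last by rewrite sum_if_eq ifT //; lia.
apply: eq_bigr => a _; rewrite /hcut.
case: ifP => han; last by rewrite ifN //; apply/negP => /eqP; lia.
rewrite !inside_Wij //; last by lia.
case: eqP => hai; last first.
  have -> : (a.+1 < i)%N = (a < i)%N by apply/idP/idP; lia.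
  by rewrite /cross eqxx mulr0.
have -> : (a < i)%N by lia.
have -> : (a.+1 < i)%N = false by apply/negP; lia.
case: ifP => hbj; last by rewrite /cross /= mulr0.
by rewrite /hcost /cross /= mulr1 ifN //; apply/negP => /eqP; lia.
Qed.

Lemma col_cost_Wij n i j a : (1 <= j)%N -> (i <= n)%N -> (j <= n)%N -> (a <= n)%N ->
  col_cost (Wij n.+1 i j) a = if (a < i)%N then 1 - eps n.+1 j else 0.
Proof.
move=> hj1 hin hjn ha.
transitivity (\sum_(b < n.+1) (if (b : nat) == j.-1 then
   (if (a < i)%N then 1 - eps n.+1 j else 0) else 0)); last by rewrite sum_if_eq ifT //; lia.
apply: eq_bigr => b _; rewrite /vcut.
case: ifP => hbn; last by rewrite ifN //; apply/negP => /eqP; lia.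
rewrite !inside_Wij //; last by lia.
case: eqP => hbj; last first.
  have -> : (b.+1 < j)%N = (b < j)%N by apply/idP/idP; lia.
  by rewrite /cross eqxx mulr0.
have -> : (b < j)%N by lia.
have -> : (b.+1 < j)%N = false by apply/negP; lia.
case: ifP => hai; last by rewrite /cross /= mulr0.
rewrite vcost_inner /cross /= ?mulr1; last by apply/negP => /eqP; lia.
by have -> : b.+1 = j by lia.
Qed.

Lemma cost_Wij n i j : (1 <= i)%N -> (i <= n)%N -> (1 <= j)%N -> (j <= n)%N ->
  cut_cost (Wij n.+1 i j) = j%:R + (1 - eps n.+1 j) *+ i.
Proof.
move=> hi1 hin hj1 hjn; rewrite cut_cost_decomp.
have -> : vlinks_cost (Wij n.+1 i j) = 0.
  apply: big1 => b _; rewrite inside_Wij ?leq_ord // /cross /Wij !inE /=.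
  by rewrite hi1 orbF eqxx mulr0.
have -> : hlinks_cost (Wij n.+1 i j) = 0.
  apply: big1 => a _; rewrite inside_Wij ?leq_ord // /cross /Wij !inE /=.
  by rewrite hj1 andbT orbF eqxx mulr0.
rewrite !add0r /rows_cost /cols_cost.
under eq_bigr do rewrite row_cost_Wij ?leq_ord //.
under [X in _ + X]eq_bigr do rewrite col_cost_Wij ?leq_ord //.
rewrite !sum_if_lt (minn_idPl (leqW hin)) (minn_idPl (leqW hjn)).
by rewrite -[j%:R]/(1 *+ j).
Qed.

Lemma row_cost_switch n (W : {set vertex n.+1}) b c d : (c <= d)%N -> (d <= n)%N ->
  inside W c b != inside W d b -> 1 <= row_cost W b.
Proof.
move=> hcd hdn hx.
have [a [h1 h2 h3]] := bool_switch (f := fun a => inside W a b) hcd hx.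
apply: (le_trans (hcost_ge1 n b)).
have -> : hcost n b = hcut W a b by rewrite /hcut ifT ?/cross ?h3 ?mulr1 //; lia.
by apply: (ler_sum_term (F := hcut W ^~ b)) => [x|]; [apply: hcut_ge0 | lia].
Qed.

Lemma row_cost_switch2 n (W : {set vertex n.+1}) b c d e :
  (c <= d)%N -> (d <= e)%N -> (e <= n)%N ->
  inside W c b != inside W d b -> inside W d b != inside W e b -> 2%:R <= row_cost W b.
Proof.
move=> hcd hde hen hx1 hx2.
have [a1 [h1 h2 h3]] := bool_switch (f := fun a => inside W a b) hcd hx1.
have [a2 [h4 h5 h6]] := bool_switch (f := fun a => inside W a b) hde hx2.
have := ler_sum_term2 (n := n) (F := hcut W ^~ b) (m1 := a1) (m2 := a2)
   (fun x => hcut_ge0 W x b) ltac:(apply/negP => /eqP; lia) ltac:(lia) ltac:(lia).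
rewrite /hcut !ifT ?/cross ?h3 ?h6 ?mulr1; try lia.
by have := hcost_ge1 n b; rewrite /row_cost /hcut; lra.
Qed.

Lemma col_cost_switch n (W : {set vertex n.+1}) a c d : (c <= d)%N -> (d <= n)%N ->
  inside W a c != inside W a d ->
  exists b, [/\ (c <= b)%N, (b < d)%N & vcost n a b <= col_cost W a].
Proof.
move=> hcd hdn hx.
have [b [h1 h2 h3]] := bool_switch (f := fun b => inside W a b) hcd hx.
exists b; split => //.
have -> : vcost n a b = vcut W a b by rewrite /vcut ifT ?/cross ?h3 ?mulr1 //; lia.
by apply: (ler_sum_term (F := vcut W a)) => [x|]; [apply: vcut_ge0 | lia].
Qed.

Lemma col_cost_switch2 n (W : {set vertex n.+1}) a c d e :
  (c <= d)%N -> (d <= e)%N -> (e <= n)%N ->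
  inside W a c != inside W a d -> inside W a d != inside W a e ->
  exists b1 b2, [/\ (c <= b1)%N, (b1 < d)%N, (d <= b2)%N, (b2 < e)%N &
     vcost n a b1 + vcost n a b2 <= col_cost W a].
Proof.
move=> hcd hde hen hx1 hx2.
have [b1 [h1 h2 h3]] := bool_switch (f := fun b => inside W a b) hcd hx1.
have [b2 [h4 h5 h6]] := bool_switch (f := fun b => inside W a b) hde hx2.
exists b1, b2; split => //.
have -> : vcost n a b1 = vcut W a b1 by rewrite /vcut ifT ?/cross ?h3 ?mulr1 //; lia.
have -> : vcost n a b2 = vcut W a b2 by rewrite /vcut ifT ?/cross ?h6 ?mulr1 //; lia.
apply: ler_sum_term2 => [x|||]; [exact: vcut_ge0 | apply/negP => /eqP | |]; lia.
Qed.

Lemma row_cost_le_cut n (W : {set vertex n.+1}) b : (b <= n)%N ->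
  row_cost W b <= cut_cost W.
Proof.
move=> hb; have [_ _ grid] := cut_cost_parts W.
have c0 : 0 <= cols_cost W by apply: sumr_ge0 => a _; apply: col_cost_ge0.
have := ler_sum_term (F := row_cost W) (row_cost_ge0 W) hb.
by rewrite -/(rows_cost W) => h; lra.
Qed.

Lemma col_cost_le_cut n (W : {set vertex n.+1}) a : (a <= n)%N ->
  col_cost W a <= cut_cost W.
Proof.
move=> ha; have [_ _ grid] := cut_cost_parts W.
have r0 : 0 <= rows_cost W by apply: sumr_ge0 => b _; apply: row_cost_ge0.
have := ler_sum_term (F := col_cost W) (col_cost_ge0 W) ha.
by rewrite -/(cols_cost W) => h; lra.
Qed.

Lemma heavy_uncut n p q (X : rat) : K4 n.+1 * cross p q <= X -> X < K4 n.+1 -> p = q.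
Proof. by rewrite /cross; case: p; case: q => //= h1 h2; rewrite mulr1 in h1; lra. Qed.

Section CheapCut.
Variables (n i j : nat) (W : {set vertex n.+1}).
Hypotheses (hin : (i <= n)%N) (hjn : (j <= n)%N).
Hypothesis W_vt : forall b : 'I_n.+1, (vt b \in W) = (b < j)%N.
Hypothesis W_ht : forall a : 'I_n.+1, (ht a \in W) = (a < i)%N.
Hypothesis W_cheap : cut_cost W < K4 n.+1.

(* The links are uncut, so the first column and the first row of W follow
   the terminals. *)
Lemma first_col b : (b <= n)%N -> inside W 0 b = (b < j)%N.
Proof.
move=> hb; have [vlinks _ _] := cut_cost_parts W.
have link : K4 n.+1 * cross (vt (inord b : 'I_n.+1) \in W) (inside W 0 (inord b : 'I_n.+1)) <= cut_cost W.
  apply: le_trans _ vlinks; rewrite /vlinks_cost (bigD1 (inord b)) //= lerDl.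
  by apply: sumr_ge0 => c _; apply: mulr_ge0 (ltW (K4_gt0 _)) (cross_ge0 _ _).
by have := heavy_uncut link W_cheap; rewrite W_vt !inordK.
Qed.

Lemma first_row a : (a <= n)%N -> inside W a 0 = (a < i)%N.
Proof.
move=> ha; have [_ hlinks _] := cut_cost_parts W.
have link : K4 n.+1 * cross (ht (inord a : 'I_n.+1) \in W) (inside W (inord a : 'I_n.+1) 0) <= cut_cost W.
  apply: le_trans _ hlinks; rewrite /hlinks_cost (bigD1 (inord a)) //= lerDl.
  by apply: sumr_ge0 => c _; apply: mulr_ge0 (ltW (K4_gt0 _)) (cross_ge0 _ _).
by have := heavy_uncut link W_cheap; rewrite W_ht !inordK.
Qed.

(* The heavy last row and last column are uncut, and u_{0,n}, u_{n,0} lie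
   outside W, so the whole last row and column lie outside W. *)
Lemma last_row a : (a <= n)%N -> inside W a n = false.
Proof.
elim: a => [|a IH] ha; first by rewrite first_col // ltnNge hjn.
rewrite -IH; last exact: ltnW.
have edge : K4 n.+1 * cross (inside W a n) (inside W a.+1 n) <= cut_cost W.
  apply: le_trans _ (row_cost_le_cut W (leqnn n)).
  have := ler_sum_term (F := hcut W ^~ n) (hcut_ge0 W ^~ n) (ltnW ha).
  by rewrite {1}/hcut ha /hcost eqxx.
exact/esym/(heavy_uncut edge W_cheap).
Qed.

Lemma last_col b : (b <= n)%N -> inside W n b = false.
Proof.
elim: b => [|b IH] hb; first by rewrite first_row // ltnNge hin.
rewrite -IH; last exact: ltnW.
have edge : K4 n.+1 * cross (inside W n b) (inside W n b.+1) <= cut_cost W.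
  apply: le_trans _ (col_cost_le_cut W (leqnn n)).
  have := ler_sum_term (F := vcut W n) (vcut_ge0 W n) (ltnW hb).
  by rewrite {1}/vcut hb /vcost eqxx.
exact/esym/(heavy_uncut edge W_cheap).
Qed.

(* Each of the first j rows joins u_{0,b} in W to u_{n,b} outside W. *)
Lemma rows_cost_ge : j%:R <= rows_cost W.
Proof.
rewrite -[j%:R]/(1 *+ j) -(minn_idPl (leqW hjn)) -sum_if_lt.
apply: (ler_sum_upto (F := row_cost W) (G := fun b => if (b < j)%N then 1 else 0)).
move=> b hb; case: ifP => hbj; last exact: row_cost_ge0.
by apply: (row_cost_switch (c := 0) (d := n)) => //; rewrite first_col // last_col // hbj.
Qed.

(* If u_{a,j} lies in W for some a < i, row j is cut twice. *)
Lemma rows_cost_ge_split a : (a < i)%N -> inside W a j ->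
  j%:R + 2%:R <= rows_cost W.
Proof.
move=> hai haj; have han : (a <= n)%N by apply: leq_trans (ltnW hai) hin.
have -> : j%:R + 2%:R = \sum_(b < n.+1)
    ((if (b < j)%N then 1 else 0) + (if (b : nat) == j then 2%:R else 0) : rat).
  by rewrite big_split /= sum_if_lt sum_if_eq hjn (minn_idPl (leqW hjn)).
apply: (ler_sum_upto (F := row_cost W) (G := fun b =>
   (if (b < j)%N then 1 else 0) + (if b == j then 2%:R else 0))) => b hb.
case: (ltngtP b j) => hbj.
- rewrite addr0; apply: (row_cost_switch (c := 0) (d := n)) => //.
  by rewrite first_col // last_col // hbj.
- by rewrite add0r; apply: row_cost_ge0.
- rewrite add0r hbj; apply: (row_cost_switch2 (c := 0) (d := a) (e := n)) => //.
    by rewrite first_col // ltnn haj.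
  by rewrite haj last_col.
Qed.

(* Each of the first i columns joins u_{a,0} in W to u_{a,n} outside W. *)
Lemma col_cost_ge a : (a < i)%N -> 1 - eps n.+1 n <= col_cost W a.
Proof.
move=> hai; have han : (a <= n)%N by apply: leq_trans (ltnW hai) hin.
have [b [_ hb hc]] := col_cost_switch (W := W) (a := a) (c := 0) (d := n) (leq0n _) (leqnn _)
  ltac:(by rewrite first_row // last_row // hai).
exact: le_trans (vcost_ge a hb) hc.
Qed.

Lemma cols_cost_ge : i%:R * (1 - eps n.+1 n) <= cols_cost W.
Proof.
rewrite mulr_natl -(minn_idPl (leqW hin)) -sum_if_lt.
apply: (ler_sum_upto (F := col_cost W)
  (G := fun a => if (a < i)%N then 1 - eps n.+1 n else 0)) => a ha.
by case: ifP => hai; [exact: col_cost_ge | exact: col_cost_ge0].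
Qed.

Lemma Wij_deviation : W != Wij n.+1 i j ->
  exists a b, [/\ (a <= n)%N, (b <= n)%N & inside W a b != (a < i)%N && (b < j)%N].
Proof.
move=> hne.
case: (boolP [exists a : 'I_n.+1, exists b : 'I_n.+1,
                inside W a b != (a < i)%N && (b < j)%N]).
  by case/existsP => a /existsP [b dev]; exists a, b; rewrite !leq_ord.
rewrite negb_exists => /forallP agree; case/negP: hne; apply/eqP/setP.
move=> [[a b]|[b|a]]; rewrite /Wij !inE /=.
- by have := agree a; rewrite negb_exists => /forallP /(_ b); rewrite negbK insideE => /eqP.
- by rewrite W_vt orbF.
- by rewrite W_ht orbF.
Qed.

Section RowJOutside.
Hypothesis row_j_out : forall a, (a < i)%N -> inside W a j = false.

(* Each of the first i columns is then cut below height j, and the cheapest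
   such edge costs 1 - eps_j. *)
Lemma col_cost_ge_inner a : (a < i)%N -> 1 - eps n.+1 j <= col_cost W a.
Proof.
move=> hai; have han : (a <= n)%N by apply: leq_trans (ltnW hai) hin.
have [b [_ hb hc]] := col_cost_switch (W := W) (a := a) (c := 0) (d := j) (leq0n _) hjn
    ltac:(by rewrite first_row // row_j_out // hai).
apply: le_trans hc; rewrite vcost_inner; last by rewrite neq_ltn (leq_trans hai hin).
by rewrite lerD2l lerN2; apply: eps_le.
Qed.

(* At a vertex u_{a,b} where W differs from W_{i,j}, column a costs strictly
   more than in W_{i,j}: either it is cut below height b < j, or it is cut
   twice, or (for a >= i) it is cut at all. *)
Lemma col_cost_gt_deviation a b : (a <= n)%N -> (b <= n)%N ->
  inside W a b != (a < i)%N && (b < j)%N ->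
  (if (a < i)%N then 1 - eps n.+1 j else 0) < col_cost W a.
Proof.
move=> han hbn dev; have eps_n := eps_lt1 n.
have [hai|hia] := ltnP a i; last first.
  have hab : inside W a b by move: dev; rewrite ltnNge hia /=; case: (inside W a b).
  have [c [_ hc cost_c]] := col_cost_switch (W := W) (a := a) (c := 0) (d := b) (leq0n _) hbn
    ltac:(by rewrite first_row // ltnNge hia hab).
  by have := vcost_ge a (leq_trans hc hbn); lra.
have a_inner : a != n by rewrite neq_ltn (leq_trans hai hin).
move: dev; rewrite hai /=; have [hbj|hjb] := ltnP b j => dev.
  have hab : inside W a b = false by move: dev; case: (inside W a b).
  have [c [_ hc cost_c]] := col_cost_switch (W := W) (a := a) (c := 0) (d := b) (leq0n _) hbn
    ltac:(by rewrite first_row // hai hab).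
  apply: lt_le_trans cost_c; rewrite vcost_inner // ltrD2l ltrN2.
  by apply: eps_lt => //; apply: leq_ltn_trans hc hbj.
have hab : inside W a b by move: dev; case: (inside W a b).
have hjb' : (j < b)%N.
  by rewrite ltn_neqAle hjb andbT; apply/eqP => hjb'; rewrite -hjb' row_j_out in hab.
have [c1 [c2 [_ hc1 _ hc2 cost_c]]] := col_cost_switch2 (W := W) (a := a)
    (c := 0) (d := j) (e := b) (leq0n _) (ltnW hjb') hbn
    ltac:(by rewrite first_row // row_j_out // hai) ltac:(by rewrite row_j_out // hab).
have c1_cost : 1 - eps n.+1 j <= vcost n a c1.
  by rewrite vcost_inner // lerD2l lerN2; apply: eps_le.
by have := vcost_ge a (leq_trans hc2 hbn); lra.
Qed.

Lemma cols_cost_gt : W != Wij n.+1 i j -> i%:R * (1 - eps n.+1 j) < cols_cost W.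
Proof.
case/Wij_deviation => a [b [han hbn dev]].
rewrite mulr_natl -(minn_idPl (leqW hin)) -sum_if_lt.
apply: (ltr_sum_upto (F := col_cost W)
  (G := fun a => if (a < i)%N then 1 - eps n.+1 j else 0) (m := a)) => //.
  by move=> x hx; case: ifP => hxi; [exact: col_cost_ge_inner | exact: col_cost_ge0].
exact: col_cost_gt_deviation dev.
Qed.
End RowJOutside.

Lemma cheap_cut_cost_gt : W != Wij n.+1 i j ->
  j%:R + i%:R * (1 - eps n.+1 j) < cut_cost W.
Proof.
move=> hne; have [_ _ grid] := cut_cost_parts W.
have rows_j := rows_cost_ge.
have eps_j : 0 <= i%:R * eps n.+1 j by apply: mulr_ge0; [apply: ler0n | apply: eps_ge0].
case: (boolP [exists a : 'I_n.+1, (a < i)%N && inside W a j]).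
  case/existsP => a /andP [hai haj].
  have := rows_cost_ge_split hai haj; have := cols_cost_ge.
  have := small_eps hin (leqnn n); rewrite !mulrBr !mulr1; lra.
rewrite negb_exists => /forallP row_j_free.
have row_j_out a : (a < i)%N -> inside W a j = false.
  move=> hai; have a_le : (a < n.+1)%N by apply: leq_trans hai (leqW hin).
  by have := row_j_free (Ordinal a_le); rewrite /= hai => /negbTE.
have := cols_cost_gt row_j_out hne; rewrite !mulrBr !mulr1; lra.
Qed.
End CheapCut.

Lemma Wij_min_cut n i j (W : {set vertex n.+1}) :
  (1 <= i)%N -> (i <= n)%N -> (1 <= j)%N -> (j <= n)%N ->
  (forall b : 'I_n.+1, (vt b \in W) = (b < j)%N) ->
  (forall a : 'I_n.+1, (ht a \in W) = (a < i)%N) ->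
  W != Wij n.+1 i j -> cut_cost (Wij n.+1 i j) < cut_cost W.
Proof.
move=> hi1 hin hj1 hjn W_vt W_ht hne.
rewrite cost_Wij // -[(1 - _) *+ i]mulr_natl ltNge; apply/negP => W_le.
have eps_j : 0 <= i%:R * eps n.+1 j by apply: mulr_ge0; [apply: ler0n | apply: eps_ge0].
have W_cheap : cut_cost W < K4 n.+1.
  by have := K4_big hin hjn; move: W_le; rewrite mulrBr mulr1; lra.
by have := cheap_cut_cost_gt hin hjn W_vt W_ht W_cheap hne; lra.
Qed.

Theorem lemma3p7 (k : nat) (hk : (3 <= k)%N) (i j : nat)
    (hi1 : (1 <= i)%N) (hik : (i <= k.-1)%N)
    (hj1 : (1 <= j)%N) (hjk : (j <= k.-1)%N) :
  [/\ separating (Sij k i j) (Wij k i j),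
      (forall W' : {set vertex k}, separating (Sij k i j) W' ->
         W' != Wij k i j -> W' != ~: Wij k i j ->
         cut_cost (Wij k i j) < cut_cost W')
    & cut_cost (Wij k i j) =
        i%:R + j%:R - \sum_(1 <= alpha < i.+1) eps k j].
Proof.
case: k hk hik hjk => [//|n] _ /= hin hjn.
split.
- apply/orP; left; apply/eqP/setP => -[[a b]|[b|a]];
    by rewrite /Wij /Sij /terminals !inE /= ?andbF ?andbT ?orbF.
-
  move=> W' /orP [] /eqP /setP W'_terms ne_Wij ne_coWij.
    apply: Wij_min_cut => // [b|a].
      by have := W'_terms (vt b); rewrite /Sij /terminals !inE /= andbT.
    by have := W'_terms (ht a); rewrite /Sij /terminals !inE /= andbT.
  rewrite -(cut_costC W'); apply: Wij_min_cut => // [b|a|].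
  + have := W'_terms (vt b).
    by rewrite /Sij /terminals !inE /= !andbT => ->; rewrite negbK.
  + have := W'_terms (ht a).
    by rewrite /Sij /terminals !inE /= !andbT => ->; rewrite negbK.
  + by apply: contra ne_coWij => /eqP <-; rewrite setCK.
- rewrite cost_Wij // sumr_const_nat subn1 /= -[(1 - _) *+ i]mulr_natl.
  by rewrite -[eps _ _ *+ i]mulr_natl mulrBr mulr1; lra.
Qed.
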